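(* Let $\alpha,\beta\in\mathbb{C}$ be not both zero, let $\ell(x,y)=\alpha x+\beta y$, and let $$H(x,y)=\tfrac12 a_1x^2+a_2xy+\tfrac12 a_3y^2+a_4x+a_5y$$ with coefficients $a_1,\dots,a_5$. Consider the Hamiltonian vector field $$f(x,y)=\ell(x,y)\begin{pmatrix}\partial H/\partial y\\ -\partial H/\partial x\end{pmatrix},$$ and its Kahan map $\Phi_f$ (with step $\varepsilon=1$). Set $\gamma_1=a_2^2-a_1a_3$, $\gamma_2=a_3a_4^2+a_1a_5^2-2a_2a_4a_5$, $C(x,y)=H(x,y)-\tfrac12\gamma_2\ell^2(x,y)$, $D(x,y)=1-\gamma_1\ell^2(x,y)$, and let $\mathfrak E$ be the pencil of conics $\mathcal E_\lambda=\{(x,y): C(x,y)-\lambda D(x,y)=0\}$, where the conic $C(x,y)=0$ is assumed nonsingular. Then $$\Phi_f=I_{\mathfrak E,B_\infty}\circ I_{\mathfrak E,B_0},$$ where $B_\infty=[-\beta:\alpha:0]$ is the point at infinity of the line $\ell(x,y)=0$ and $$B_0=\rho(-\beta,\alpha),\qquad \rho=\frac{1+(\beta a_4-\alpha a_5)}{\beta^2a_1-2\alpha\beta a_2+\alpha^2a_3}$$ (both points lie on the line $\ell(x,y)=0$).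
   Context: Kahan discretization: for a quadratic vector field $f(x)=Q(x)+Bx+c$ on $\mathbb{C}^n$ (each component of $Q$ a quadratic form, $B$ a matrix, $c$ a vector), the Kahan map $\widetilde x=\Phi_f(x)$ (step $\varepsilon=1$) is defined by $\frac{\widetilde x-x}{2}=Q(x,\widetilde x)+\frac12B(x+\widetilde x)+c$, where $Q(x,\widetilde x)=\frac12(Q(x+\widetilde x)-Q(x)-Q(\widetilde x))$; explicitly $\Phi_f(x)=x+2(I-f'(x))^{-1}f(x)$ with $f'$ the Jacobi matrix. It is a birational map. Switches: for a nonsingular conic $\mathcal E$ and a point $B\notin\mathcal E$ (possibly a point at infinity of $\mathbb{C}P^2$), the $B$-switch $I_{\mathcal E,B}:\mathcal E\to\mathcal E$ sends $P\in\mathcal E$ to the second intersection point of $\mathcal E$ with the line $(BP)$. For a pencil $\mathfrak E=\{\mathcal E_\lambda\}$ of conics, the $B$-switch $I_{\mathfrak E,B}:\mathbb{C}^2\dashrightarrow\mathbb{C}^2$ is the birational map sending a non-base point $P$ to $I_{\mathcal E_\lambda,B}(P)$, where $\mathcal E_\lambda$ is the unique conic of the pencil through $P$. *)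

From HB Require Import structures.
From mathcomp Require Import all_boot all_algebra.
From mathcomp Require Import reals complex mpoly.
Set Implicit Arguments. Unset Strict Implicit. Unset Printing Implicit Defensive.
Import GRing.Theory.
Local Open Scope ring_scope.

(* Points of K^2 are column vectors 'cV[K]_2; coordinate x = index 0, y = index 1.
   Polynomials in (x,y) are {mpoly K[2]} with x = 'X_0, y = 'X_1. *)

Definition pt2 (K : fieldType) (x y : K) : 'cV[K]_2 :=
  \col_(i < 2) (if i == 0 :> nat then x else y).

Definition pev (K : fieldType) (p : {mpoly K[2]}) (P : 'cV[K]_2) : K :=
  p.@[fun i => P i 0].

Definition vfield (K : fieldType) := 'I_2 -> {mpoly K[2]}.

Definition vf_eval (K : fieldType) (f : vfield K) (P : 'cV[K]_2) : 'cV[K]_2 :=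
  \col_(i < 2) pev (f i) P.

Definition jacobi (K : fieldType) (f : vfield K) (P : 'cV[K]_2) : 'M[K]_2 :=
  \matrix_(i < 2, j < 2) pev (mderiv j (f i)) P.

(* Kahan map (step 1): Phi_f(x) = x + 2 (I - f'(x))^{-1} f(x), defined where
   I - f'(x) is invertible. *)
Definition kahan_defined (K : fieldType) (f : vfield K) (P : 'cV[K]_2) : bool :=
  (1%:M - jacobi f P) \in unitmx.

Definition kahan (K : fieldType) (f : vfield K) (P : 'cV[K]_2) : 'cV[K]_2 :=
  P + 2%:R *: (invmx (1%:M - jacobi f P) *m vf_eval f P).

(* Symmetric 3x3 matrix of (the homogenization of) a polynomial q of degree <= 2:
   for q = A x^2 + 2B xy + C y^2 + 2D x + 2E y + F it is [[A,B,D],[B,C,E],[D,E,F]]. *)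
Definition conic_matrix (K : fieldType) (q : {mpoly K[2]}) : 'M[K]_3 :=
  \matrix_(i < 3, j < 3)
    match split (i : 'I_(2 + 1)), split (j : 'I_(2 + 1)) with
    | inl i', inl j' => 2%:R^-1 * pev (mderiv i' (mderiv j' q)) 0
    | inl i', inr _  => 2%:R^-1 * pev (mderiv i' q) 0
    | inr _, inl j'  => 2%:R^-1 * pev (mderiv j' q) 0
    | inr _, inr _   => pev q 0
    end.

Definition conic_nonsingular (K : fieldType) (q : {mpoly K[2]}) : Prop :=
  \det (conic_matrix q) != 0.

(* Q is the second intersection point of the conic {X | q X = 0} with the line
   through P (a point of the conic) with direction v: the restriction of q to
   the line s |-> P + s v is a genuine quadratic k s (s - t) (both intersection
   points finite, line not contained in the conic), and Q = P + t v. *)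
Definition second_point (K : fieldType) (q : {mpoly K[2]}) (P v Q : 'cV[K]_2)
  : Prop :=
  exists k t : K, [/\ k != 0, Q = P + t *: v &
                      forall s : K, pev q (P + s *: v) = k * s * (s - t)].

(* The conic of the pencil {C - lambda D = 0} through P (P not a base point):
   D(P) C - C(P) D = 0  (lambda = C(P)/D(P), lambda = oo allowed). *)
Definition pencil_conic (K : fieldType) (C D : {mpoly K[2]}) (P : 'cV[K]_2)
  : {mpoly K[2]} := pev D P *: C - pev C P *: D.

Definition not_base_point (K : fieldType) (C D : {mpoly K[2]}) (P : 'cV[K]_2)
  : Prop := ~ (pev C P = 0 /\ pev D P = 0).

Definition pencil_switch_fin (K : fieldType) (C D : {mpoly K[2]})
  (B P Q : 'cV[K]_2) : Prop :=
  [/\ not_base_point C D P,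
      conic_nonsingular (pencil_conic C D P),
      pev (pencil_conic C D P) B != 0
    & second_point (pencil_conic C D P) P (P - B) Q].

(* B-switch of the pencil, for the point at infinity B = [v0 : v1 : 0]
   (v <> 0); lines through B are the lines with direction v.  B not on the
   conic is equivalent to k <> 0 in second_point (k = quadratic part at v). *)
Definition pencil_switch_inf (K : fieldType) (C D : {mpoly K[2]})
  (v P Q : 'cV[K]_2) : Prop :=
  [/\ not_base_point C D P,
      conic_nonsingular (pencil_conic C D P),
      v != 0
    & second_point (pencil_conic C D P) P v Q].

Section Objects.
Variable K : fieldType.
Variables (alpha beta a1 a2 a3 a4 a5 : K).

Definition ell : {mpoly K[2]} := alpha *: 'X_(0 : 'I_2) + beta *: 'X_(1 : 'I_2).

Definition Ham : {mpoly K[2]} :=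
  (2%:R^-1 * a1) *: 'X_(0 : 'I_2) ^+ 2 + a2 *: ('X_(0 : 'I_2) * 'X_(1 : 'I_2))
  + (2%:R^-1 * a3) *: 'X_(1 : 'I_2) ^+ 2
  + a4 *: 'X_(0 : 'I_2) + a5 *: 'X_(1 : 'I_2).

Definition ham_field : vfield K := fun i =>
  if i == 0 :> nat then ell * mderiv (1 : 'I_2) Ham
  else - (ell * mderiv (0 : 'I_2) Ham).

Definition gamma1 : K := a2 ^+ 2 - a1 * a3.
Definition gamma2 : K := a3 * a4 ^+ 2 + a1 * a5 ^+ 2 - 2%:R * a2 * a4 * a5.

Definition Cpol : {mpoly K[2]} := Ham - (2%:R^-1 * gamma2) *: ell ^+ 2.
Definition Dpol : {mpoly K[2]} := 1 - gamma1 *: ell ^+ 2.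

Definition rho_den : K :=
  beta ^+ 2 * a1 - 2%:R * alpha * beta * a2 + alpha ^+ 2 * a3.
Definition rho : K := (1 + (beta * a4 - alpha * a5)) / rho_den.

(* B_0 = rho (-beta, alpha);  B_oo = [-beta : alpha : 0] (direction (-beta, alpha)) *)
Definition B0 : 'cV[K]_2 := rho *: pt2 (- beta) alpha.
Definition Binf_dir : 'cV[K]_2 := pt2 (- beta) alpha.

End Objects.

From Pilot Require Import Defs.
From HB Require Import structures.
From mathcomp Require Import all_boot all_algebra.
From mathcomp Require Import reals complex mpoly.
From mathcomp Require Import ring.
Import GRing.Theory Num.Theory.
Set Implicit Arguments. Unset Strict Implicit. Unset Printing Implicit Defensive.
Local Open Scope ring_scope.

(* For P = (x, y) and a direction v, the conic
   D(P) C - C(P) D of the pencil through P restricts to the line P + s v as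
   a(v) s^2 + b(v) s, where, with kappa = gamma2 / 2 - gamma1 H(P),
     a(v) = D(P) H_2(v) - kappa ell(v)^2,
     b(v) = D(P) <grad H(P), v> - 2 kappa ell(P) ell(v),
   and H_2 is the quadratic part of H; hence the second intersection point is
   P - (b(v) / a(v)) v.  Along W = (-beta, alpha) we have ell(W) = 0, so the
   B_oo-switch is Q |-> Q - (2 <grad H(Q), W> / W^T H'' W) W.  Substituting
   both formulas into the linear form (I - f'(P)) (Q - P) = 2 f(P) of the
   Kahan equation leaves a rational identity in x, y and the coefficients. *)

Section Coordinates.
Variable K : fieldType.

Lemma pt2_00 (x y : K) : pt2 x y 0 0 = x. Proof. by rewrite mxE. Qed.
Lemma pt2_10 (x y : K) : pt2 x y 1 0 = y. Proof. by rewrite mxE. Qed.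

Lemma pt2E (Z : 'cV[K]_2) : Z = pt2 (Z 0 0) (Z 1 0).
Proof.
apply/matrixP=> i j; rewrite (ord1 j) mxE.
by case: i => [[|[|//]] ?]; congr (Z _ _); apply/val_inj.
Qed.

Lemma pt2D (x y x' y' : K) : pt2 x y + pt2 x' y' = pt2 (x + x') (y + y').
Proof. by apply/matrixP=> i j; rewrite !mxE; case: ifP. Qed.

Lemma pt2B (x y x' y' : K) : pt2 x y - pt2 x' y' = pt2 (x - x') (y - y').
Proof. by apply/matrixP=> i j; rewrite !mxE; case: ifP. Qed.

Lemma pt2Z (c x y : K) : c *: pt2 x y = pt2 (c * x) (c * y).
Proof. by apply/matrixP=> i j; rewrite !mxE; case: ifP. Qed.

Lemma mulmx_pt2 (M : 'M[K]_2) (x y : K) :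
  M *m pt2 x y = pt2 (M 0 0 * x + M 0 1 * y) (M 1 0 * x + M 1 1 * y).
Proof.
apply/matrixP=> i j; rewrite (ord1 j) !mxE !big_ord_recl big_ord0 addr0 !mxE /=.
by case: i => [[|[|//]] ?] /=; congr (M _ _ * _ + M _ _ * _); apply/val_inj.
Qed.

End Coordinates.

Lemma mderivXU (R : nzRingType) n (i j : 'I_n) :
  mderiv i ('X_j : {mpoly R[n]}) = ((j == i)%:R)%:MP.
Proof.
rewrite mderivX mnm1E; case: eqP => [->|_]; last by rewrite scale0r mpolyC0.
have -> : (U_(i) - U_(i) = 0)%MM by apply/mnmP=> k; rewrite mnmBE subnn mnm0E.
by rewrite mpolyX0 scale1r mpolyC1.
Qed.

Lemma pev_pencil_conic (K : fieldType) (C D : {mpoly K[2]}) (P Z : 'cV[K]_2) :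
  pev (pencil_conic C D P) Z = pev D P * pev C Z - pev C P * pev D Z.
Proof. by rewrite /pencil_conic /pev mevalB !mevalZ. Qed.

Lemma kahan_eq (K : fieldType) (f : vfield K) (P Q : 'cV[K]_2) :
  kahan_defined f P ->
  (1%:M - jacobi f P) *m (Q - P) = 2%:R *: vf_eval f P -> kahan f P = Q.
Proof. by move=> fP QP; rewrite /kahan scalemxAr -QP (mulKmx fP) addrC subrK. Qed.

Lemma second_pointZ (K : fieldType) (q : {mpoly K[2]}) (P v Q : 'cV[K]_2) c :
  c != 0 -> second_point q P v Q -> second_point q P (c *: v) Q.
Proof.
move=> c_neq0 [k [t [k_neq0 -> qE]]]; exists (k * c ^+ 2), (t / c); split.
- by rewrite mulf_neq0 ?expf_neq0.
- by rewrite scalerA divfK.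
- by move=> s; rewrite scalerA qE; field.
Qed.

Lemma second_point_quadratic (K : fieldType) (q : {mpoly K[2]})
    (P v Q : 'cV[K]_2) (a b : K) :
  (2%:R : K) != 0 ->
  (forall s, pev q (P + s *: v) = a * s ^+ 2 + b * s) ->
  second_point q P v Q -> a != 0 /\ Q = P - (b / a) *: v.
Proof.
move=> two_neq0 qE [k [t [k_neq0 -> qkE]]].
have e1 := qE 1; have em1 := qE (-1); rewrite !qkE in e1 em1.
have -> : a = k.
  have -> : a = ((a * 1 ^+ 2 + b * 1) + (a * (-1) ^+ 2 + b * -1)) / 2%:R.
    by field.
  by rewrite -e1 -em1; field.
have -> : b = - (k * t).
  have -> : b = ((a * 1 ^+ 2 + b * 1) - (a * (-1) ^+ 2 + b * -1)) / 2%:R.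
    by field.
  by rewrite -e1 -em1; field.
by split=> //; rewrite -scaleNr; congr (_ + _ *: _); field.
Qed.

Section HamiltonianKahan.
Variables (K : fieldType) (alpha beta a1 a2 a3 a4 a5 : K).
Hypothesis two_neq0 : (2%:R : K) != 0.

Local Notation f := (ham_field alpha beta a1 a2 a3 a4 a5).
Local Notation C := (Cpol alpha beta a1 a2 a3 a4 a5).
Local Notation D := (Dpol alpha beta a1 a2 a3).
Local Notation B0 := (B0 alpha beta a1 a2 a3 a4 a5).
Local Notation W := (Binf_dir alpha beta).
Local Notation rho_den := (rho_den alpha beta a1 a2 a3).
Local Notation gamma1 := (gamma1 a1 a2 a3).
Local Notation gamma2 := (gamma2 a1 a2 a3 a4 a5).

Definition ell_at (x y : K) := alpha * x + beta * y.
Definition ham_quad (x y : K) :=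
  2%:R^-1 * a1 * x ^+ 2 + a2 * x * y + 2%:R^-1 * a3 * y ^+ 2.
Definition ham_at (x y : K) := ham_quad x y + a4 * x + a5 * y.
Definition dHdx (x y : K) := a1 * x + a2 * y + a4.
Definition dHdy (x y : K) := a2 * x + a3 * y + a5.
Definition dHdW (x y : K) := alpha * dHdy x y - beta * dHdx x y.
Definition D_at (x y : K) := 1 - gamma1 * ell_at x y ^+ 2.
Definition kappa (x y : K) := 2%:R^-1 * gamma2 - gamma1 * ham_at x y.

Definition line_quad (x y v0 v1 : K) :=
  D_at x y * ham_quad v0 v1 - kappa x y * ell_at v0 v1 ^+ 2.
Definition line_lin (x y v0 v1 : K) :=
  D_at x y * (dHdx x y * v0 + dHdy x y * v1)
  - 2%:R * kappa x y * ell_at x y * ell_at v0 v1.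

Definition rho_num : K := 1 + (beta * a4 - alpha * a5).

Ltac pev_simpl := rewrite /pev ?expr2
  !(mevalD, mevalB, mevalN, mevalZ, mevalM, mevalC, meval1, mevalXU) ?pt2_00 ?pt2_10 /=.

Lemma pev_Cpol x y :
  pev C (pt2 x y) = ham_at x y - 2%:R^-1 * gamma2 * ell_at x y ^+ 2.
Proof. rewrite /Cpol /Ham /ell; pev_simpl; rewrite /ham_at /ham_quad /ell_at; ring. Qed.

Lemma pev_Dpol x y : pev D (pt2 x y) = D_at x y.
Proof. rewrite /Dpol /ell; pev_simpl; rewrite /D_at /ell_at; ring. Qed.

Lemma vf_eval_ham_field x y :
  vf_eval f (pt2 x y) = pt2 (ell_at x y * dHdy x y) (- (ell_at x y * dHdx x y)).
Proof.
apply/matrixP=> i j; rewrite (ord1 j) !mxE /ham_field /Ham /ell.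
case: ifP => _; rewrite ?expr2 !(mderivD, mderivN, mderivZ, mderivM, mderivC, mderivXU);
  pev_simpl; rewrite /ell_at /dHdx /dHdy; by field; rewrite two_neq0.
Qed.

Lemma pev_mderiv_ham_field x y (i j : 'I_2) :
  pev (mderiv j (f i)) (pt2 x y) =
    (if j == 0 :> nat then alpha else beta)
      * (if i == 0 :> nat then dHdy x y else - dHdx x y)
    + ell_at x y * (if i == 0 :> nat then if j == 0 :> nat then a2 else a3
                    else - if j == 0 :> nat then a1 else a2).
Proof.
rewrite /ham_field /Ham /ell.
case: i => [[|[|//]] ?]; case: j => [[|[|//]] ?] /=;
  rewrite ?expr2 !(mderivD, mderivN, mderivZ, mderivM, mderivC, mderivXU);
  pev_simpl; rewrite /ell_at /dHdx /dHdy; by field; rewrite two_neq0.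
Qed.

Lemma pencil_conic_on_line x y v0 v1 s :
  pev (pencil_conic C D (pt2 x y)) (pt2 x y + s *: pt2 v0 v1) =
    line_quad x y v0 v1 * s ^+ 2 + line_lin x y v0 v1 * s.
Proof.
rewrite pt2Z pt2D pev_pencil_conic !pev_Cpol !pev_Dpol.
rewrite /line_quad /line_lin /kappa /D_at /ham_at /ham_quad /ell_at /dHdx /dHdy.
by field; rewrite two_neq0.
Qed.

Lemma pencil_switch_infE Q1 Q2 :
  pencil_switch_inf C D W Q1 Q2 ->
  Q2 = Q1 - (2%:R * dHdW (Q1 0 0) (Q1 1 0) / rho_den) *: W.
Proof.
case=> _ _ _; rewrite [Q1]pt2E !pt2_00 !pt2_10 /Binf_dir.
move: (Q1 0 0) (Q1 1 0) => x y.
move/(second_point_quadratic two_neq0 (pencil_conic_on_line x y _ _)).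
have -> : line_quad x y (- beta) alpha = D_at x y * rho_den / 2%:R.
  by rewrite /line_quad /ham_quad /ell_at /Defs.rho_den; field; rewrite two_neq0.
have -> : line_lin x y (- beta) alpha = D_at x y * dHdW x y.
  by rewrite /line_lin /dHdW /ell_at; ring.
case=> a_neq0 ->.
have [D_neq0 rho_den_neq0] : D_at x y != 0 /\ rho_den != 0.
  apply/andP; rewrite -negb_or -mulf_eq0.
  by apply: contraNneq a_neq0 => ->; rewrite mul0r.
by congr (_ - _ *: _); field; rewrite D_neq0 rho_den_neq0 two_neq0.
Qed.

Lemma scaled_B0_direction x y :
  rho_den != 0 ->
  rho_den *: (pt2 x y - B0) =
    pt2 (rho_den * x + rho_num * beta) (rho_den * y - rho_num * alpha).
Proof.
move=> rho_den_neq0; rewrite /Defs.B0 /rho pt2Z pt2B pt2Z.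
by congr (pt2 _ _); rewrite /rho_num; field.
Qed.

Lemma switch_formulas_kahan_eq x y :
  rho_den != 0 ->
  let u0 := rho_den * x + rho_num * beta in
  let u1 := rho_den * y - rho_num * alpha in
  line_quad x y u0 u1 != 0 ->
  let Q1 := pt2 x y - (line_lin x y u0 u1 / line_quad x y u0 u1) *: pt2 u0 u1 in
  let Q2 := Q1 - (2%:R * dHdW (Q1 0 0) (Q1 1 0) / rho_den) *: W in
  (1%:M - jacobi f (pt2 x y)) *m (Q2 - pt2 x y) = 2%:R *: vf_eval f (pt2 x y).
Proof.
move=> + u0 u1 a_neq0 Q1 Q2; rewrite /Q2 /Q1 /Binf_dir /Defs.rho_den => rho_den_neq0.
rewrite !(pt2Z, pt2B) !pt2_00 !pt2_10 vf_eval_ham_field mulmx_pt2 pt2Z.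
rewrite !mxE !pev_mderiv_ham_field /=.
congr (pt2 _ _); rewrite /u0 /u1 /line_quad /line_lin /kappa /D_at /ham_at /ham_quad
  /dHdW /ell_at /dHdx /dHdy /rho_num /gamma1 /gamma2 /Defs.rho_den;
  field; rewrite rho_den_neq0 two_neq0 /=.
(* What remains is [field]'s expanded form of [2 * line_quad x y u0 u1 != 0]. *)
all: apply: contraNneq a_neq0 => E0; apply/eqP/(mulfI two_neq0).
all: rewrite mulr0 -E0 /line_quad /kappa /D_at /ham_at /ham_quad /ell_at /u0 /u1
  /rho_num /gamma1 /gamma2 /Defs.rho_den; by field.
Qed.

Theorem kahan_pencil_switches P Q1 Q2 :
  rho_den != 0 ->
  kahan_defined f P ->
  pencil_switch_fin C D B0 P Q1 -> pencil_switch_inf C D W Q1 Q2 ->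
  kahan f P = Q2.
Proof.
move=> rho_den_neq0 fP [_ _ _ /(second_pointZ rho_den_neq0) sw1] sw2.
rewrite (pencil_switch_infE sw2); apply: kahan_eq fP _.
move: sw1; rewrite [P]pt2E; move: (P 0 0) (P 1 0) => x y.
rewrite scaled_B0_direction //.
case/(second_point_quadratic two_neq0 (pencil_conic_on_line x y _ _)) => a_neq0 ->.
exact: switch_formulas_kahan_eq.
Qed.

End HamiltonianKahan.

Theorem theorem2 (R : realType) (alpha beta a1 a2 a3 a4 a5 : R[i]) :
  (alpha != 0) || (beta != 0) ->
  conic_nonsingular (Cpol alpha beta a1 a2 a3 a4 a5) ->
  rho_den alpha beta a1 a2 a3 != 0 ->
  forall P Q1 Q2 : 'cV[R[i]]_2,
    kahan_defined (ham_field alpha beta a1 a2 a3 a4 a5) P ->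
    pencil_switch_fin (Cpol alpha beta a1 a2 a3 a4 a5)
      (Dpol alpha beta a1 a2 a3) (B0 alpha beta a1 a2 a3 a4 a5) P Q1 ->
    pencil_switch_inf (Cpol alpha beta a1 a2 a3 a4 a5)
      (Dpol alpha beta a1 a2 a3) (Binf_dir alpha beta) Q1 Q2 ->
    kahan (ham_field alpha beta a1 a2 a3 a4 a5) P = Q2.
Proof.
move=> _ _ rho_den_neq0 P Q1 Q2.
by apply: kahan_pencil_switches rho_den_neq0; rewrite pnatr_eq0.
Qed.
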